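(* Let $n\geq 8$ and $4\leq k\leq n-4$. An $n$-tournament is $k$-skew-spectrally monomorphic if and only if it is switching equivalent to a transitive tournament.
   Context: An $n$-tournament is a digraph on vertex set $V$, $|V|=n$, in which every pair of distinct vertices is joined by exactly one arc. Its adjacency matrix $A=(a_{ij})$ has $a_{ij}=1$ if $v_i$ dominates $v_j$ and $0$ otherwise; its skew-adjacency matrix is $S=A-A^{\top}$. A tournament is $k$-skew-spectrally monomorphic if all $k\times k$ principal submatrices of $S$ have the same characteristic polynomial. A tournament is transitive if whenever $u$ dominates $v$ and $v$ dominates $w$, then $u$ dominates $w$. The switch of a tournament $T$ with respect to $X\subseteq V$ is the tournament obtained by reversing all arcs between $X$ and $V\setminus X$; two tournaments on the same vertex set are switching equivalent if one is a switch of the other. *)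

From mathcomp Require Import all_boot all_order all_algebra.
Set Implicit Arguments. Unset Strict Implicit. Unset Printing Implicit Defensive.
Import GRing.Theory.
Local Open Scope ring_scope.

(* A tournament on vertex set 'I_n: T u v means "u dominates v". *)
Definition is_tournament (n : nat) (T : rel 'I_n) : Prop :=
  (forall u, ~~ T u u) /\ (forall u v, u != v -> T u v (+) T v u).

Definition adj_mx (n : nat) (T : rel 'I_n) : 'M[int]_n :=
  \matrix_(i, j) (T i j)%:R.
Definition skew_adj_mx (n : nat) (T : rel 'I_n) : 'M[int]_n :=
  adj_mx T - (adj_mx T)^T.

Definition principal_submx (n k : nat) (M : 'M[int]_n) (f : 'I_k -> 'I_n)
  : 'M[int]_k := mxsub f f M.

Definition k_skew_spectrally_monomorphic (n k : nat) (T : rel 'I_n) : Prop :=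
  forall f g : 'I_k -> 'I_n, injective f -> injective g ->
    char_poly (principal_submx (skew_adj_mx T) f)
    = char_poly (principal_submx (skew_adj_mx T) g).

Definition transitive_tournament (n : nat) (T : rel 'I_n) : Prop :=
  forall u v w, T u v -> T v w -> T u w.

Definition switch (n : nat) (T : rel 'I_n) (X : {set 'I_n}) : rel 'I_n :=
  fun u v => if (u \in X) != (v \in X) then T v u else T u v.

Definition switching_equivalent (n : nat) (T T' : rel 'I_n) : Prop :=
  exists X : {set 'I_n}, T' = switch T X.

From mathcomp Require Import all_boot all_order all_algebra fingroup perm.
From mathcomp Require Import ring zify.
Set Implicit Arguments. Unset Strict Implicit. Unset Printing Implicit Defensive.
Import GRing.Theory Num.Theory.

(* Switching by X conjugates every principal submatrix of the skew-adjacency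
   matrix by a diagonal matrix of signs, and all k-subtournaments of a
   transitive tournament are isomorphic; this gives one direction.
   Conversely, the constant coefficient of the (k-4)-th derivative of the
   characteristic polynomial of a k x k principal submatrix is (k-4)! times the
   sum of its 4 x 4 principal minors.  As 4 <= k <= n-4, these sums over the
   4-subsets of the k-subsets determine the summands (a Gottlieb-Kantor type
   fact), so all 4 x 4 principal minors are equal.  After switching a vertex v0
   into a source, the minor on {v0, a, b, c} is 9 or 1 according as abc is a
   3-cycle or not; since no 4 vertices span four 3-cycles, no triple avoiding
   v0 is a 3-cycle, and the switched tournament is transitive. *)

Local Open Scope ring_scope.

Section CharPoly.
Variable R : comNzRingType.

Lemma char_poly_conj m (A P Q : 'M[R]_m) :
  P *m Q = 1%:M -> char_poly (P *m A *m Q) = char_poly A.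
Proof.
move=> PQ; have PQC : map_mx polyC P *m map_mx polyC Q = 1%:M.
  by rewrite -map_mxM PQ map_mx1.
have E : char_poly_mx (P *m A *m Q) =
          map_mx polyC P *m char_poly_mx A *m map_mx polyC Q.
  rewrite /char_poly_mx mulmxBr mulmxBl -!map_mxM; congr (_ - _).
  by rewrite mul_mx_scalar -scalemxAl PQC scalemx1.
by rewrite /char_poly E !det_mulmx mulrAC -det_mulmx PQC det1 mul1r.
Qed.

Lemma char_poly_mxsub_perm m (A : 'M[R]_m) (s : 'S_m) :
  char_poly (mxsub s s A) = char_poly A.
Proof.
have -> : mxsub s s A = perm_mx s *m A *m perm_mx s^-1.
  by rewrite -row_permE -col_permE; apply/matrixP=> i j; rewrite !mxE.
by apply: char_poly_conj; rewrite -perm_mxM mulgV perm_mx1.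
Qed.

Lemma char_poly_mxsub_imset n p q (M : 'M[R]_n) (f : 'I_p -> 'I_n) (g : 'I_q -> 'I_n) :
  injective f -> injective g -> f @: setT = g @: setT ->
  char_poly (mxsub f f M) = char_poly (mxsub g g M).
Proof.
move=> injf injg fg.
have epq : p = q.
  have := congr1 (fun X : {set _} => #|X|) fg.
  by rewrite /= !card_imset // !cardsT !card_ord.
subst q.
have gf i : exists j, g j == f i.
  have : f i \in g @: setT by rewrite -fg imset_f ?inE.
  by case/imsetP=> j _ ->; exists j.
pose h i := xchoose (gf i).
have gh i : g (h i) = f i by exact/eqP/(xchooseP (gf i)).
have injh : injective h by move=> i j hij; apply: injf; rewrite -!gh hij.
have -> : mxsub f f M = mxsub (perm injh) (perm injh) (mxsub g g M).
  by apply/matrixP=> i j; rewrite !mxE !permE !gh.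
exact: char_poly_mxsub_perm.
Qed.

Lemma deriv_prod m (F : 'I_m -> {poly R}) :
  (\prod_(i < m) F i)^`() =
  \sum_(i < m) \prod_(j < m) (if j == i then (F j)^`() else F j).
Proof.
elim: m F => [|m IH] F; first by rewrite !big_ord0 derivC.
rewrite big_ord_recr derivM IH big_ord_recr /= mulr_suml; congr (_ + _).
  apply: eq_bigr => i _; rewrite [RHS]big_ord_recr /=.
  by rewrite -val_eqE /= eq_sym ltn_eqF.
rewrite [RHS]big_ord_recr /= eqxx; congr (_ * _); apply: eq_bigr => j _.
by rewrite -val_eqE /= ltn_eqF.
Qed.

Lemma deriv_det m (M : 'M[{poly R}]_m) :
  (\det M)^`() =
  \sum_(i < m) \det (\matrix_(j, l) (if j == i then (M j l)^`() else M j l)).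
Proof.
rewrite /determinant raddf_sum exchange_big /=; apply: eq_bigr => s _.
rewrite derivM -signr_odd -polyCN -polyC_exp derivC mul0r add0r.
rewrite deriv_prod mulr_sumr; apply: eq_bigr => i _.
by congr (_ * _); apply: eq_bigr => j _; rewrite !mxE.
Qed.

Lemma deriv_char_poly m (A : 'M[R]_m) :
  (char_poly A)^`() = \sum_(i < m) char_poly (row' i (col' i A)).
Proof.
rewrite /char_poly deriv_det; apply: eq_bigr => i _.
set N := \matrix_(j, l) _.
have Nii l : N i l = (i == l)%:R.
  rewrite /N !mxE eqxx derivB derivMn derivX derivC subr0.
  by case: (i == l).
rewrite (expand_det_row _ i) (bigD1 i) //= big1 ?addr0; last first.
  by move=> l /negPf nl; rewrite Nii eq_sym nl mul0r.
rewrite Nii eqxx mul1r /cofactor addnn -signr_odd odd_double expr0 mul1r.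
rewrite -row'_col'_char_poly_mx; congr (\det _); apply/matrixP=> a b.
by rewrite !mxE eq_sym (negPf (neq_lift i a)).
Qed.

End CharPoly.

Section SubsetSums.
Variable T : finType.
Implicit Types (U V W Z : {set T}).

Definition sum_subsets (M : nmodType) (g : {set T} -> M) t U : M :=
  \sum_(W : {set T} | (W \subset U) && (#|W| == t)) g W.

Definition const_on_card (A : Type) V m (F : {set T} -> A) :=
  forall U U', U \subset V -> U' \subset V -> #|U| = m -> #|U'| = m -> F U = F U'.

Lemma sum_subsets_setD1 (M : nmodType) (g : {set T} -> M) t U :
  \sum_(v in U) sum_subsets g t (U :\ v) = sum_subsets g t U *+ (#|U| - t).
Proof.
rewrite /sum_subsets.
have E v : v \in U -> \sum_(W : {set T} | (W \subset U :\ v) && (#|W| == t)) g W =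
    \sum_(W : {set T} | (W \subset U) && (#|W| == t)) (if v \notin W then g W else 0).
  move=> vU; rewrite [RHS]big_mkcond [LHS]big_mkcond; apply: eq_bigr => W _ /=.
  by rewrite subsetD1; case: (W \subset U); case: (v \in W); case: (#|W| == t).
rewrite (eq_bigr _ E) exchange_big -sumrMnl; apply: eq_bigr => W /andP [WU /eqP cW].
rewrite -big_mkcondr /= sumr_const; congr (_ *+ _).
rewrite -cW -[in RHS](setIidPr WU) -cardsD.
by apply: eq_card => v; rewrite !inE andbC.
Qed.

Lemma exists_card_between Z V p : Z \subset V -> (#|Z| <= p <= #|V|)%N ->
  exists2 U : {set T}, (Z \subset U) && (U \subset V) & #|U| = p.
Proof.
move=> ZV /andP [Zp pV].
pose s := take (p - #|Z|) (enum (V :\: Z)).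
have sVZ x : x \in s -> x \in V :\: Z by move/mem_take; rewrite mem_enum.
exists (Z :|: [set x in s]).
  rewrite subsetUl subUset ZV /=; apply/subsetP=> x; rewrite inE.
  by move/sVZ; rewrite inE => /andP [].
have disj : Z :&: [set x in s] = set0.
  by apply/setP=> x; rewrite !inE; apply/andP=> -[xZ /sVZ]; rewrite inE xZ.
rewrite cardsU disj cards0 subn0 cardsE (card_uniqP _) ?take_uniq ?enum_uniq //.
rewrite size_take -cardE cardsD (setIidPr ZV).
by case: ltnP; lia.
Qed.

Lemma sum_subsets_setU1 (M : nmodType) (g : {set T} -> M) t U a : a \notin U ->
  sum_subsets g t.+1 (a |: U) =
  sum_subsets g t.+1 U + sum_subsets (fun Y => g (a |: Y)) t U.
Proof.
move=> aU; rewrite /sum_subsets (bigID (fun W => a \in W)) /= addrC; congr (_ + _).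
  by apply: eq_bigl => W; rewrite andbAC -subsetD1 setU1K.
rewrite (reindex_onto (fun Y => a |: Y) (fun W => W :\ a)) /=; last first.
  by move=> W /andP [_ aW]; rewrite setD1K.
apply: eq_bigl => Y; rewrite setU11 andbT.
case: (boolP (a \in Y)) => aY.
  have -> : (Y \subset U) = false by apply: contraNF aU => /subsetP ->.
  have -> : ((a |: Y) :\ a == Y) = false.
    by apply/negbTE; apply: contraTneq aY => <-; rewrite setD11.
  by rewrite andbF.
rewrite setU1K // eqxx andbT cardsU1 aY eqSS subUset sub1set setU11 /=.
by rewrite -[U in RHS](setU1K aU) subsetD1 aY andbT.
Qed.

Lemma const_on_card_exchange (A : Type) V t (g : {set T} -> A) :
  (forall Z a b, Z \subset V -> a \in V -> b \in V -> a \notin Z -> b \notin Z ->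
     #|Z| = t -> g (a |: Z) = g (b |: Z)) ->
  const_on_card V t.+1 g.
Proof.
move=> exch; suff K d W W' : #|W :\: W'| = d -> W \subset V -> W' \subset V ->
    #|W| = t.+1 -> #|W'| = t.+1 -> g W = g W'.
  by move=> W W'; apply: K.
elim: d W W' => [|d IH] W W' dW WV W'V cW cW'.
  congr g; apply/eqP; rewrite eqEcard cW cW' leqnn andbT.
  by rewrite -setD_eq0 -cards_eq0 dW.
have [a] : exists a, a \in W :\: W' by apply/set0Pn; rewrite -cards_eq0 dW.
have [b] : exists b, b \in W' :\: W.
  by apply/set0Pn; rewrite -cards_eq0 cardsD setIC cW' -cW -cardsD dW.
rewrite !inE => /andP [bW bW'] /andP [aW' aW].
have aWa : a \notin W :\ a by rewrite setD11.
have bWa : b \notin W :\ a by rewrite inE (negPf bW) andbF.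
have cWa : #|W :\ a| = t by move: (cardsD1 a W); rewrite aW cW => -[].
have WaV : W :\ a \subset V by apply: subset_trans WV; apply: subsetDl.
rewrite -(setD1K aW) (exch _ _ _ WaV (subsetP WV a aW) (subsetP W'V b bW') aWa bWa cWa).
apply: IH => //; last by rewrite cardsU1 bWa cWa.
  have -> : (b |: W :\ a) :\: W' = (W :\: W') :\ a.
    apply/setP=> x; rewrite !inE; case: (eqVneq x b) => [->|_]; last by rewrite andbCA.
    by rewrite bW' (negPf bW) !andbF.
  by move: (cardsD1 a (W :\: W')); rewrite dW !inE aW aW' => -[].
by rewrite subUset sub1set (subsetP W'V b bW').
Qed.

Lemma const_on_card_sum_subsets (R : numDomainType) t m V (g : {set T} -> R) :
  (t <= m)%N -> (m + t <= #|V|)%N ->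
  const_on_card V m (sum_subsets g t) -> const_on_card V t g.
Proof.
elim: t m V g => [|t IH] m V g tm mV sums.
  by move=> U U' _ _ /cards0_eq -> /cards0_eq ->.
case: m tm mV sums => // m tm mV sums.
(* The difference [g'] below has zero sums over the m-subsets of [V'], so by
   induction it is constant on the t-subsets of [V'], hence zero. *)
apply: const_on_card_exchange => Z a b ZV aV bV aZ bZ cZ.
have [<- //|ab] := eqVneq a b.
set V' := V :\ a :\ b; pose g' Y := g (a |: Y) - g (b |: Y).
have V'V : V' \subset V by apply: subset_trans (subsetDl _ _) (subsetDl _ _).
have aV' : a \notin V' by rewrite !inE eqxx andbF.
have bV' : b \notin V' by rewrite !inE eqxx.
have cV' : #|V'| = (#|V| - 2)%N.
  move: (cardsD1 a V) (cardsD1 b (V :\ a)); rewrite aV !inE eq_sym ab bV /=.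
  by rewrite -/V'; lia.
have sum0 U : U \subset V' -> #|U| = m -> sum_subsets g' t U = 0.
  move=> UV' cU; have UV := subset_trans UV' V'V.
  have aU : a \notin U by apply: contra aV' => /(subsetP UV').
  have bU : b \notin U by apply: contra bV' => /(subsetP UV').
  have := sums (a |: U) (b |: U); rewrite !subUset !sub1set aV bV UV !cardsU1 aU bU cU.
  rewrite !sum_subsets_setU1 // => /(_ isT isT erefl erefl) /addrI.
  by rewrite /sum_subsets sumrB => ->; rewrite subrr.
have g'const : const_on_card V' t g'.
  apply: (IH m) => //; first by rewrite cV'; lia.
  by move=> U U' UV' U'V' cU cU'; rewrite !sum0.
have ZV' : Z \subset V'.
  by rewrite !subsetD1 ZV aZ bZ.
have [|U /andP [ZU UV'] cU] := @exists_card_between Z V' m ZV'.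
  by rewrite cZ cV'; apply/andP; split; lia.
have : sum_subsets g' t U = g' Z *+ #|[set Y : {set T} | (Y \subset U) && (#|Y| == t)]|.
  rewrite /sum_subsets -sumr_const; apply: eq_big => [Y|Y /andP [YU /eqP cY]].
    by rewrite inE.
  by apply: g'const; rewrite ?cY // (subset_trans YU).
rewrite sum0 // => /esym/eqP; rewrite mulrn_eq0 subr_eq0 => /orP [|/eqP //].
by rewrite cards_eq0 => /eqP/setP/(_ Z); rewrite !inE ZU cZ eqxx.
Qed.

End SubsetSums.

Lemma imset_enum_val (T : finType) (U : {set T}) :
  (fun i : 'I_#|U| => enum_val i) @: setT = U.
Proof.
apply/setP=> x; apply/imsetP/idP => [[i _ ->]|xU]; first exact: enum_valP.
by exists (enum_rank_in xU x); rewrite ?inE ?enum_rankK_in.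
Qed.

Lemma exists_enum_card (T : finType) (U : {set T}) k : #|U| = k ->
  exists2 f : 'I_k -> T, injective f & f @: setT = U.
Proof.
by move=> <-; exists (fun i => enum_val i); [exact: enum_val_inj|exact: imset_enum_val].
Qed.

Section PrincipalCharPoly.
Variables (R : comNzRingType) (n : nat) (M : 'M[R]_n).
Implicit Types U : {set 'I_n}.

Definition principal_char_poly (U : {set 'I_n}) : {poly R} :=
  char_poly (mxsub (fun i : 'I_#|U| => enum_val i) (fun i : 'I_#|U| => enum_val i) M).

Lemma principal_char_polyE p (f : 'I_p -> 'I_n) :
  injective f -> principal_char_poly (f @: setT) = char_poly (mxsub f f M).
Proof.
move=> injf; apply: char_poly_mxsub_imset => //; first exact: enum_val_inj.
exact: imset_enum_val.
Qed.

Lemma deriv_principal_char_poly U :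
  (principal_char_poly U)^`() = \sum_(v in U) principal_char_poly (U :\ v).
Proof.
rewrite {1}/principal_char_poly deriv_char_poly [RHS]big_enum_val /=.
apply: eq_bigr => i _; set e := fun i : 'I_#|U| => enum_val i.
have injel : injective (fun j => e (lift i j)).
  by move=> j l /enum_val_inj /lift_inj.
have -> : U :\ e i = (fun j => e (lift i j)) @: setT.
  apply/setP=> x; rewrite !inE; apply/andP/imsetP => [[xi xU]|[j _ ->]].
    have ir : i != enum_rank_in xU x.
      by apply: contraNneq xi => ->; rewrite /e enum_rankK_in.
    have [j rj _] := unlift_some ir.
    by exists j; rewrite ?inE // /e -rj enum_rankK_in.
  split; last exact: enum_valP.
  by rewrite (inj_eq enum_val_inj) eq_sym neq_lift.
by rewrite principal_char_polyE //; congr char_poly; apply/matrixP=> a b; rewrite !mxE.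
Qed.

Lemma derivn_principal_char_poly t j U : #|U| = (t + j)%N ->
  (principal_char_poly U)^`(j) = sum_subsets principal_char_poly t U *+ j`!.
Proof.
elim: j U => [|j IH] U cU.
  rewrite derivn0 mulr1n addn0 in cU *; rewrite /sum_subsets (big_pred1 U) // => W /=.
  by rewrite eqEcard -cU; case WU: (W \subset U); rewrite //= eqn_leq subset_leq_card.
rewrite derivSn deriv_principal_char_poly raddf_sum /=.
rewrite (eq_bigr (fun v => sum_subsets principal_char_poly t (U :\ v) *+ j`!)); last first.
  by move=> v vU; apply: IH; move: (cardsD1 v U); rewrite vU cU; lia.
by rewrite sumrMnl sum_subsets_setD1 -mulrnA cU factS mulnC; congr (_ *+ _); lia.
Qed.

End PrincipalCharPoly.

Lemma const_on_card_principal_char_poly_coef0 (R : numDomainType) n (M : 'M[R]_n) k t :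
  (t <= k)%N -> (k + t <= n)%N -> const_on_card setT k (principal_char_poly M) ->
  const_on_card setT t (fun W => (principal_char_poly M W)`_0).
Proof.
move=> tk ktn charM; apply: (const_on_card_sum_subsets tk).
  by rewrite cardsT card_ord.
have coef0 (U : {set 'I_n}) : #|U| = k ->
    ((principal_char_poly M U)^`(k - t))`_0 =
    sum_subsets (fun W => (principal_char_poly M W)`_0) t U *+ (k - t)`!.
  move=> cU; rewrite (@derivn_principal_char_poly _ _ _ t) ?cU ?subnKC //.
  by rewrite coefMn /sum_subsets coef_sum.
move=> U U' UT U'T cU cU'.
have := congr1 (fun p => (p^`(k - t))`_0) (charM U U' UT U'T cU cU').
by rewrite /= !coef0 // => /eqP; rewrite eqrMn2r eqn0Ngt fact_gt0 => /eqP.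
Qed.

Section SmallDeterminants.
Variable R : comNzRingType.

Lemma det_mx2 (A : 'M[R]_2) : \det A = A 0 0 * A 1 1 - A 0 1 * A 1 0.
Proof.
(* Reading the entries through [inord] turns the ordinals produced by the
   expansion into numerals, so that [ring] sees equal entries as equal atoms. *)
pose D (i j : nat) := A (inord i) (inord j).
have AD (i j : 'I_2) : A i j = D i j by rewrite /D !inord_val.
rewrite (expand_det_row _ 0) !big_ord_recl big_ord0 /cofactor !det_mx11 !mxE !AD /=.
ring.
Qed.

Lemma det_mx3 (A : 'M[R]_3) : \det A =
  A 0 0 * (A 1 1 * A 2 2 - A 1 2 * A 2 1) - A 0 1 * (A 1 0 * A 2 2 - A 1 2 * A 2 0)
  + A 0 2 * (A 1 0 * A 2 1 - A 1 1 * A 2 0).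
Proof.
pose D (i j : nat) := A (inord i) (inord j).
have AD (i j : 'I_3) : A i j = D i j by rewrite /D !inord_val.
rewrite (expand_det_row _ 0) !big_ord_recl big_ord0 /cofactor !det_mx2 !mxE !AD /=.
ring.
Qed.

Lemma det_skew_mx4 (A : 'M[R]_4) :
  (forall i, A i i = 0) -> (forall i j, A j i = - A i j) ->
  \det A = (A 0 1 * A 2 3 - A 0 2 * A 1 3 + A 0 3 * A 1 2) ^+ 2.
Proof.
move=> A0 AN; pose D (i j : nat) := A (inord i) (inord j).
have AD (i j : 'I_4) : A i j = D i j by rewrite /D !inord_val.
rewrite (expand_det_row _ 0) !big_ord_recl big_ord0 /cofactor !det_mx3 !mxE !AD /=.
have D0 i : D i i = 0 by rewrite /D A0.
have DN i j : D j i = - D i j by rewrite /D AN.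
rewrite !D0 (DN 1%N 0%N) (DN 2%N 0%N) (DN 3%N 0%N) (DN 2%N 1%N) (DN 3%N 1%N) (DN 3%N 2%N).
ring.
Qed.

End SmallDeterminants.

Section Tournaments.
Variable n : nat.
Implicit Types (T : rel 'I_n) (X : {set 'I_n}).

Lemma tournament_rev T a b : is_tournament T -> a != b -> T b a = ~~ T a b.
Proof. by case=> _ tot ab; move: (tot a b ab); case: (T a b); case: (T b a). Qed.

Lemma switch_tournament T X : is_tournament T -> is_tournament (switch T X).
Proof.
case=> irr tot; split=> [u|u v uv]; rewrite /switch ?eqxx; first exact: irr.
by case: (u \in X); case: (v \in X); rewrite /= ?(addbC (T v u)); apply: tot.
Qed.

Lemma switch_source T v0 v : is_tournament T -> v != v0 ->
  switch T [set u | T u v0] v0 v.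
Proof.
move=> tT vv0; rewrite /switch !inE (negbTE (tT.1 v0)) /=.
by case Tv: (T v v0); rewrite //= (tournament_rev tT vv0) Tv.
Qed.

Lemma char_poly_switch T X p (f : 'I_p -> 'I_n) :
  char_poly (mxsub f f (skew_adj_mx (switch T X))) =
  char_poly (mxsub f f (skew_adj_mx T)).
Proof.
pose sgn v : int := if v \in X then -1 else 1.
pose D : 'M[int]_p := diag_mx (\row_i sgn (f i)).
have -> : mxsub f f (skew_adj_mx (switch T X)) = D *m mxsub f f (skew_adj_mx T) *m D.
  apply/matrixP => i j; rewrite mul_diag_mx mul_mx_diag !mxE /switch /sgn.
  by case: (f i \in X); case: (f j \in X) => /=; ring.
apply: char_poly_conj; apply/matrixP => i j; rewrite mul_diag_mx !mxE /sgn.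
by case: (i == j); case: (f i \in X); rewrite /= ?mulr1n ?mulr0n ?mulr0 //; ring.
Qed.

Lemma principal_char_poly_switch T X U :
  principal_char_poly (skew_adj_mx (switch T X)) U =
  principal_char_poly (skew_adj_mx T) U.
Proof. exact: char_poly_switch. Qed.

Lemma transitive_rank T k (f : 'I_k -> 'I_n) :
  is_tournament T -> transitive_tournament T -> injective f ->
  exists2 r : 'I_k -> 'I_k, injective r & forall i j, T (f i) (f j) = (r i < r j)%N.
Proof.
move=> tT trT injf; pose rank i := #|[set j | T (f j) (f i)]|.
have rank_lt i : (rank i < k)%N.
  rewrite -[k]card_ord -cardsT; apply/proper_card/properP; split; first exact: subsetT.
  by exists i; rewrite ?inE ?(negbTE (tT.1 _)).
have rank_mono i j : T (f i) (f j) -> (rank i < rank j)%N.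
  move=> Tij; apply/proper_card/properP; split.
    by apply/subsetP => l; rewrite !inE => Tli; apply: trT Tli Tij.
  by exists i; rewrite !inE ?Tij ?(negbTE (tT.1 _)).
pose r i := Ordinal (rank_lt i).
have Tr i j : T (f i) (f j) = (r i < r j)%N.
  have [<-|ij] := eqVneq i j; first by rewrite (negbTE (tT.1 _)) ltnn.
  case Tij: (T (f i) (f j)); first by rewrite (rank_mono _ _ Tij).
  have Tji : T (f j) (f i) by rewrite (tournament_rev tT) ?Tij // (inj_eq injf).
  by apply/esym/negbTE; rewrite -leqNgt ltnW // rank_mono.
exists r => // i j rij; apply/eqP/negPn/negP => ij.
by have := tT.2 _ _ (contra_neq (@injf i j) ij); rewrite !Tr rij ltnn.
Qed.

Lemma char_poly_transitive T k (f : 'I_k -> 'I_n) :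
  is_tournament T -> transitive_tournament T -> injective f ->
  char_poly (mxsub f f (skew_adj_mx T)) =
  char_poly (skew_adj_mx (fun a b : 'I_k => (a < b)%N)).
Proof.
move=> tT trT injf; have [r injr Tr] := transitive_rank tT trT injf.
have -> : mxsub f f (skew_adj_mx T) =
    mxsub (perm injr) (perm injr) (skew_adj_mx (fun a b : 'I_k => (a < b)%N)).
  by apply/matrixP => i j; rewrite !mxE !permE !Tr.
exact: char_poly_mxsub_perm.
Qed.

Definition cyclic3 T a b c :=
  [&& T a b, T b c & T c a] || [&& T b a, T c b & T a c].

Lemma not_all_cyclic3 T a b c d : is_tournament T ->
  a != b -> a != c -> a != d -> b != c -> b != d -> c != d ->
  ~~ [&& cyclic3 T a b c, cyclic3 T a b d, cyclic3 T a c d & cyclic3 T b c d].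
Proof.
move=> tT ab ac ad bc bd cd; rewrite /cyclic3.
rewrite !(tournament_rev tT ab) !(tournament_rev tT ac) !(tournament_rev tT ad).
rewrite !(tournament_rev tT bc) !(tournament_rev tT bd) !(tournament_rev tT cd).
by case: (T a b); case: (T a c); case: (T a d); case: (T b c); case: (T b d); case: (T c d).
Qed.

Definition quad (v0 a b c : 'I_n) : 'I_4 -> 'I_n := tnth [tuple v0; a; b; c].

Lemma quad_inj v0 a b c : uniq [:: v0; a; b; c] -> injective (quad v0 a b c).
Proof.
move=> U i j; rewrite /quad !(tnth_nth v0) => E; apply/val_inj/eqP.
by rewrite -(nth_uniq v0 _ _ U) ?E //= ltn_ord.
Qed.

(* With [v0] a source, the Pfaffian of the skew-adjacency minor on
   [v0, a, b, c] is [S_bc - S_ac + S_ab], which is [+-3] on a cyclic triple and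
   [+-1] otherwise. *)
Lemma principal_char_poly_quad_coef0 T v0 a b c : is_tournament T ->
  (forall v, v != v0 -> T v0 v) -> uniq [:: v0; a; b; c] ->
  (principal_char_poly (skew_adj_mx T) (quad v0 a b c @: setT))`_0 =
  if cyclic3 T a b c then 9 else 1.
Proof.
move=> tT src U; rewrite principal_char_polyE; last exact: quad_inj.
rewrite char_poly_det (_ : (-1) ^+ 4 = 1 :> int) // mul1r det_skew_mx4; last 2 first.
- by move=> i; rewrite !mxE (negbTE (tT.1 _)) subrr.
- by move=> i j; rewrite !mxE opprB.
move: U; rewrite /= !inE !negb_or => /andP [/and3P [v0a v0b v0c]].
move=> /andP [/andP [ab ac] /andP [bc _]].
have S0 x : x != v0 -> (T v0 x)%:R - (T x v0)%:R = 1 :> int.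
  by move=> xv; rewrite src // (tournament_rev tT) ?src // eq_sym.
rewrite !mxE /quad /= !S0 1?eq_sym // /cyclic3.
rewrite !(tournament_rev tT ab) !(tournament_rev tT bc) !(tournament_rev tT ac).
by case: (T a b); case: (T b c); case: (T a c).
Qed.

Lemma transitive_source T v0 : is_tournament T -> (forall v, v != v0 -> T v0 v) ->
  (forall a b c, uniq [:: v0; a; b; c] -> ~~ cyclic3 T a b c) ->
  transitive_tournament T.
Proof.
move=> tT src acyc x y z Txy Tyz.
have asym u v : T u v -> ~~ T v u.
  have [->|uv] := eqVneq u v; first by rewrite (negbTE (tT.1 v)).
  by rewrite (tournament_rev tT uv) => ->.
have neqT u v : T u v -> u != v by apply: contraTneq => ->; exact: tT.1.
have [xv|xv] := eqVneq x v0.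
  have [zv|zv] := eqVneq z v0; last by rewrite xv src.
  by move: (asym _ _ Tyz); rewrite zv src // -zv (neqT _ _ Tyz).
have [yv|yv] := eqVneq y v0; first by move: (asym _ _ Txy); rewrite yv src // -yv.
have [zv|zv] := eqVneq z v0; first by move: (asym _ _ Tyz); rewrite zv src.
have [xz|xz] := eqVneq x z; first by move: (asym _ _ Txy); rewrite xz Tyz.
have := acyc x y z; rewrite /= !inE !negb_or !(eq_sym v0) xv yv zv.
rewrite (neqT _ _ Txy) (neqT _ _ Tyz) xz /cyclic3 Txy Tyz /= (tournament_rev tT xz).
by case: (T x z) => // /(_ isT).
Qed.

Lemma const_minors_acyclic T v0 w1 w2 w3 w4 : is_tournament T ->
  (forall v, v != v0 -> T v0 v) -> uniq [:: v0; w1; w2; w3; w4] ->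
  const_on_card setT 4 (fun W => (principal_char_poly (skew_adj_mx T) W)`_0) ->
  forall a b c, uniq [:: v0; a; b; c] -> ~~ cyclic3 T a b c.
Proof.
move=> tT src w minors a b c abc; apply/negP => cyc.
have card_quad a' b' c' : uniq [:: v0; a'; b'; c'] -> #|quad v0 a' b' c' @: setT| = 4%N.
  by move=> U; rewrite card_imset ?cardsT ?card_ord //; exact: quad_inj.
have all_cyc a' b' c' : uniq [:: v0; a'; b'; c'] -> cyclic3 T a' b' c'.
  move=> U; have := minors _ _ (subsetT _) (subsetT _)
                       (card_quad _ _ _ U) (card_quad _ _ _ abc).
  rewrite !principal_char_poly_quad_coef0 // cyc.
  by case: (cyclic3 T a' b' c').
move: w; rewrite /= !inE !negb_or => /andP [/and4P [w01 w02 w03 w04]].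
move=> /andP [/and3P [w12 w13 w14] /andP [/andP [w23 w24] /andP [w34 _]]].
have := not_all_cyclic3 tT w12 w13 w14 w23 w24 w34.
by rewrite !all_cyc //= !inE !negb_or ?w01 ?w02 ?w03 ?w04 ?w12 ?w13 ?w14 ?w23 ?w24 ?w34.
Qed.

End Tournaments.

Lemma monomorphic_const_on_card n k (T : rel 'I_n) :
  k_skew_spectrally_monomorphic k T ->
  const_on_card setT k (principal_char_poly (skew_adj_mx T)).
Proof.
move=> mono U U' _ _ cU cU'.
have [f injf <-] := exists_enum_card cU; have [g injg <-] := exists_enum_card cU'.
by rewrite !principal_char_polyE //; exact: mono.
Qed.

Lemma switching_transitive_monomorphic n k (T T' : rel 'I_n) :
  is_tournament T' -> transitive_tournament T' -> switching_equivalent T T' ->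
  k_skew_spectrally_monomorphic k T.
Proof.
move=> tT' trT' [X eT'] f g injf injg; subst T'; rewrite /principal_submx.
by rewrite -(char_poly_switch T X f) -(char_poly_switch T X g) !char_poly_transitive.
Qed.

Lemma monomorphic_switching_transitive n k (T : rel 'I_n) :
  (8 <= n)%N -> (4 <= k)%N -> (k <= n - 4)%N -> is_tournament T ->
  k_skew_spectrally_monomorphic k T ->
  exists2 X, is_tournament (switch T X) & transitive_tournament (switch T X).
Proof.
move=> n8 k4 kn tT mono.
have n5 : (4 < n)%N by lia.
pose w (i : 'I_5) : 'I_n := widen_ord n5 i.
set X := [set u | T u (w 0)]; exists X; first exact: switch_tournament.
have tT' := switch_tournament X tT.
have src v : v != w 0 -> switch T X (w 0) v by apply: switch_source.
apply: (transitive_source tT' src).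
apply: (const_minors_acyclic (w1 := w 1) (w2 := w 2) (w3 := w 3) (w4 := w 4) tT' src) => //.
have kn' : (k + 4 <= n)%N by lia.
have minors := const_on_card_principal_char_poly_coef0 k4 kn'
                 (monomorphic_const_on_card mono).
by move=> U U' UT U'T cU cU'; rewrite !principal_char_poly_switch; apply: minors.
Qed.

Local Close Scope ring_scope.

Theorem proposition5p1 (n k : nat) (T : rel 'I_n) :
  8 <= n -> 4 <= k -> k <= n - 4 -> is_tournament T ->
  k_skew_spectrally_monomorphic k T <->
  exists T' : rel 'I_n, is_tournament T' /\ transitive_tournament T' /\
                        switching_equivalent T T'.
Proof.
move=> n8 k4 kn tT; split=> [mono|[T' [tT' [trT' sw]]]].
  have [X tX trX] := monomorphic_switching_transitive n8 k4 kn tT mono.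
  by exists (switch T X); do 2!split=> //; exists X.
exact: switching_transitive_monomorphic tT' trT' sw.
Qed.
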